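(* Let $k\ge 1$ be an integer and let $G$ be a graph with $\mathrm{diam}(G)\le 2k+1$. Then $\mathrm{gp}(G)\ge \alpha_k(G)$.
   Context: All graphs are finite, simple and connected; $\mathrm{diam}(G)$ is the maximum distance between two vertices. A set $S$ of vertices is a $k$-packing if $d(u,v)>k$ for all distinct $u,v\in S$; $\alpha_k(G)$ is the maximum cardinality of a $k$-packing of $G$. A set of vertices is a general position set if no three of its vertices lie on a common geodesic (shortest path); $\mathrm{gp}(G)$ is the maximum cardinality of a general position set of $G$. *)

From mathcomp Require Import all_boot.
Set Implicit Arguments. Unset Strict Implicit. Unset Printing Implicit Defensive.

Definition simple_graph (T : finType) (e : rel T) : Prop :=
  symmetric e /\ irreflexive e.
Definition connected_graph (T : finType) (e : rel T) : Prop :=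
  forall u v : T, connect e u v.

Section Graph.
Variables (T : finType) (e : rel T).

(* A walk from u to v with vertex sequence u :: p ; its length is size p. *)
Definition walk (u v : T) (p : seq T) : bool := path e u p && (last u p == v).

Definition has_walk_of_length (u v : T) (n : nat) : bool :=
  [exists t : n.-tuple T, walk u v t].

(* Distance: the least length of a walk from u to v (searched below #|T|,
   which is exact in a connected graph since shortest walks are paths). *)
Definition dist (u v : T) : nat :=
  find (has_walk_of_length u v) (iota 0 #|T|).

Definition geodesic (u v : T) (p : seq T) : bool :=
  walk u v p && (size p == dist u v).

(* x, y, z lie on a common geodesic (a shortest u-v walk, for some u, v);
   a geodesic from u to v has exactly dist u v edges, so it is a tuple. *)
Definition on_common_geodesic (x y z : T) : bool :=
  [exists u : T, exists v : T, exists t : (dist u v).-tuple T,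
     [&& geodesic u v t, x \in u :: t, y \in u :: t & z \in u :: t]].

Definition gp_set (S : {set T}) : bool :=
  [forall x in S, forall y in S, forall z in S,
    [&& x != y, y != z & x != z] ==> ~~ on_common_geodesic x y z].

Definition k_packing (k : nat) (S : {set T}) : bool :=
  [forall u in S, forall v in S, (u != v) ==> (k < dist u v)].

Definition diam : nat := \max_(u : T) \max_(v : T) dist u v.

Definition gp_number : nat :=
  \max_(S : {set T} | gp_set S) #|S|.

Definition packing_number (k : nat) : nat :=
  \max_(S : {set T} | k_packing k S) #|S|.

End Graph.

From mathcomp Require Import all_boot.
From mathcomp Require Import zify.

(* Along a geodesic u = s_0, ..., s_n = v the distance between s_i and s_j is
   exactly |i - j|, since a shortcut would shorten the whole geodesic.  Three
   vertices of a k-packing lying on one geodesic therefore sit at positions in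
   [0, n] with n <= diam <= 2k + 1 that pairwise differ by more than k, which
   is impossible. *)

Lemma three_spaced_points_absurd {k i j l : nat} :
  i <= 2 * k + 1 -> j <= 2 * k + 1 -> l <= 2 * k + 1 ->
  k < maxn i j - minn i j -> k < maxn j l - minn j l -> k < maxn i l - minn i l -> False.
Proof. lia. Qed.

Section Distance.
Variables (T : finType) (e : rel T).

Lemma dist_le_size (u v : T) (p : seq T) : walk e u v p -> dist e u v <= size p.
Proof.
move=> uv_p; rewrite leqNgt; apply/negP => lt_p_dist.
have : dist e u v <= #|T| by rewrite /dist -[X in _ <= X](size_iota 0) find_size.
move/(leq_trans lt_p_dist) => lt_p_T.
have := before_find 0 lt_p_dist; rewrite nth_iota // add0n => /negbT/negP; apply.
by apply/existsP; exists (in_tuple p).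
Qed.

Lemma connect_dist_walk {u v : T} :
  connect e u v -> exists2 p, walk e u v p & size p = dist e u v.
Proof.
case/connectP => p0 u_p0 ->; case: (shortenP u_p0) => p u_p uniq_p _.
have lt_p_T : size p < #|T|.
  by rewrite cardE; apply: (uniq_leq_size uniq_p) => x _; rewrite mem_enum.
have has_walk : has (has_walk_of_length e u (last u p)) (iota 0 #|T|).
  apply/hasP; exists (size p); first by rewrite mem_iota.
  by apply/existsP; exists (in_tuple p); rewrite /walk u_p eqxx.
have := nth_find 0 has_walk; rewrite nth_iota ?add0n; last first.
  by move: has_walk; rewrite has_find size_iota.
by case/existsP => t uv_t; exists t; rewrite ?size_tuple.
Qed.

Lemma dist_triangle (a b c : T) :
  connected_graph e -> dist e a c <= dist e a b + dist e b c.
Proof.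
move=> conn; have [p /andP [a_p /eqP ab_p] <-] := connect_dist_walk (conn a b).
have [q /andP [b_q /eqP bc_q] <-] := connect_dist_walk (conn b c).
rewrite -size_cat; apply: dist_le_size.
by rewrite /walk cat_path a_p ab_p b_q last_cat ab_p bc_q eqxx.
Qed.

Lemma dist_path_prefix (x : T) (p : seq T) (j : nat) :
  path e x p -> j <= size p -> dist e x (nth x (x :: p) j) <= j.
Proof.
move=> x_p le_j_p; rewrite -{2}(size_takel le_j_p); apply: dist_le_size.
rewrite /walk take_path // (last_nth x) size_takel //.
by case: j le_j_p => //= j lt_j_p; rewrite nth_take.
Qed.

Lemma dist_path_nth (x : T) (p : seq T) (i j : nat) :
  path e x p -> i <= j -> j <= size p ->
  dist e (nth x (x :: p) i) (nth x (x :: p) j) <= j - i.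
Proof.
elim: i x p j => [|i IH] x p j x_p le_ij le_j_p; first by rewrite subn0 dist_path_prefix.
case: p x_p le_j_p => [|y p] /= y_p le_j_p; first by case: j le_ij le_j_p.
case/andP: y_p => _ y_p; case: j le_ij le_j_p => // j le_ij le_j_p /=.
by rewrite subSS !(set_nth_default y x) /=; [apply: IH|..]; lia.
Qed.

Lemma geodesic_dist_nth {u v : T} {t : seq T} {i j : nat} :
  connected_graph e -> geodesic e u v t -> i <= j -> j <= size t ->
  dist e (nth u (u :: t) i) (nth u (u :: t) j) = j - i.
Proof.
move=> conn /andP [/andP [u_t /eqP last_t] /eqP size_t] le_ij le_j_t.
set a := nth u (u :: t) i; set c := nth u (u :: t) j.
apply/eqP; rewrite eqn_leq dist_path_nth //=.
have ua : dist e u a <= i by apply: dist_path_prefix; lia.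
have cv : dist e c v <= size t - j.
  by rewrite -last_t (last_nth u) dist_path_nth.
have := dist_triangle u a v conn; have := dist_triangle a c v conn; lia.
Qed.

Lemma dist_le_diam (a b : T) : dist e a b <= diam e.
Proof. exact: leq_trans (leq_bigmax b) (leq_bigmax (F := fun a => \max_v dist e a v) a). Qed.

Lemma packing_geodesic_index_gap (k : nat) (S : {set T}) (u v : T) (t : seq T) (a b : T) :
  connected_graph e -> k_packing e k S -> geodesic e u v t ->
  a \in S -> b \in S -> a \in u :: t -> b \in u :: t -> a != b ->
  k < maxn (index a (u :: t)) (index b (u :: t)) - minn (index a (u :: t)) (index b (u :: t)).
Proof.
move=> conn packS geo; set s := u :: t.
wlog le_ab : a b / index a s <= index b s => [sym|].
  move=> Sa Sb sa sb neq_ab; case/orP: (leq_total (index a s) (index b s)) => le.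
    exact: sym.
  by rewrite maxnC minnC; apply: sym; rewrite // eq_sym.
move=> Sa Sb sa sb neq_ab.
rewrite (maxn_idPr le_ab) (minn_idPl le_ab) -(geodesic_dist_nth conn geo le_ab).
  rewrite !nth_index //.
  by move/forall_inP: packS => /(_ a Sa) /forall_inP /(_ b Sb) /implyP; apply.
by rewrite -ltnS -[(size t).+1]/(size s) index_mem.
Qed.

Lemma packing_gp_set (k : nat) (S : {set T}) :
  connected_graph e -> diam e <= 2 * k + 1 -> k_packing e k S -> gp_set e S.
Proof.
move=> conn diam_le packS.
apply/forall_inP => x Sx; apply/forall_inP => y Sy; apply/forall_inP => z Sz.
apply/implyP => /and3P [neq_xy neq_yz neq_xz].
apply/negP => /existsP [u /existsP [v /existsP [t /and4P [geo sx sy sz]]]].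
have size_t : size t <= 2 * k + 1.
  by case/andP: (geo) => _ /eqP ->; apply: leq_trans (dist_le_diam u v) diam_le.
have index_le a : a \in u :: t -> index a (u :: t) <= 2 * k + 1.
  by move=> sa; rewrite (leq_trans _ size_t) // -ltnS -[(size t).+1]/(size (u :: t)) index_mem.
have gap a b := @packing_geodesic_index_gap k S u v t a b conn packS geo.
by apply: (three_spaced_points_absurd (index_le x sx) (index_le y sy) (index_le z sz));
  apply: gap.
Qed.

End Distance.

Theorem corollary4p2 (T : finType) (e : rel T) (k : nat) :
  simple_graph e -> connected_graph e -> 1 <= k ->
  diam e <= 2 * k + 1 ->
  packing_number e k <= gp_number e.
Proof.
move=> _ conn _ diam_le; apply/bigmax_leqP => S packS.
by apply: leq_bigmax_cond; apply: packing_gp_set packS.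
Qed.
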